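(* Let $\mathcal{D}=\{X_i:i\in I\}$ be a set of random variables on $\Omega$ containing all constant functions, and let $Q$ be a coherent$_1$ marginal prevision on $\mathcal{D}$. Let $\mathcal{L}$ be the set of all random variables $Y$ that can be written as $Y=\sum_{j=1}^n\alpha_jX_{i_j}$ with $X_{i_j}\in\mathcal{D}$, real $\alpha_j$, such that $p_Y=\sum_{j=1}^n\alpha_jQ(X_{i_j})$ is well defined. Then setting $P(Y)=p_Y$ for $Y\in\mathcal{L}$ is well defined (independent of the chosen representation of $Y$), and $P$ is the unique coherent$_1$ extension of $Q$ to $\mathcal{L}$.
   Context: Random variables are real-valued functions on a nonempty set $\Omega$; marginal previsions are extended real numbers. A sum of extended reals is well defined if it does not involve both $+\infty$ and $-\infty$ terms; the convention $0\times(\pm\infty)=0$ is used. Coherence$_1$ (marginal case): $\{P(X_i):i\in I\}$ is coherent$_1$ if for every finite $\{i_1,\dots,i_n\}\subseteq I$, all real $\alpha_1,\dots,\alpha_n$ with $\alpha_j\ge0$ whenever $P(X_{i_j})=+\infty$ and $\alpha_j\le0$ whenever $P(X_{i_j})=-\infty$, and all real $c_1,\dots,c_n$ with $c_j=P(X_{i_j})$ whenever it is finite, $\sup_\omega\sum_{j=1}^n\alpha_j[X_{i_j}(\omega)-c_j]\ge0$. *)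

From HB Require Import structures.
From mathcomp Require Import all_boot all_order all_algebra.
From mathcomp Require Import all_classical all_reals ereal.
Set Implicit Arguments. Unset Strict Implicit. Unset Printing Implicit Defensive.
Import Order.TTheory GRing.Theory Num.Theory.
Local Open Scope classical_set_scope.
Local Open Scope ring_scope.

Section Defs.
Variables (R : realType) (Omega : Type).
Notation RV := (Omega -> R).

Definition wd_sum (n : nat) (t : 'I_n -> \bar R) : Prop :=
  ~ ((exists j, t j = +oo%E) /\ (exists j, t j = -oo%E)).

Definition coherent1 (D : set RV) (P : RV -> \bar R) : Prop :=
  forall (n : nat) (x : 'I_n -> RV) (a c : 'I_n -> R),
    injective x -> (forall j, D (x j)) ->
    (forall j, P (x j) = +oo%E -> 0 <= a j) ->
    (forall j, P (x j) = -oo%E -> a j <= 0) ->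
    (forall j, P (x j) \is a fin_num -> P (x j) = (c j)%:E) ->
    (0 <= ereal_sup (range (fun w : Omega =>
                         (\sum_(j < n) a j * (x j w - c j))%:E)))%E.

(* (n, x, a) is a representation of Y = sum_j a_j x_j with x_j in D such that
   p_Y = sum_j a_j Q(x_j) is well defined (with 0 * (+-oo) = 0). *)
Definition lin_rep (D : set RV) (Q : RV -> \bar R) (n : nat)
    (x : 'I_n -> RV) (a : 'I_n -> R) (Y : RV) : Prop :=
  [/\ forall j, D (x j),
      Y = (fun w => \sum_(j < n) a j * x j w)
    & wd_sum (fun j => ((a j)%:E * Q (x j))%E)].

Definition rep_val (Q : RV -> \bar R) (n : nat) (x : 'I_n -> RV)
    (a : 'I_n -> R) : \bar R :=
  (\sum_(j < n) ((a j)%:E * Q (x j)))%E.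

Definition linL (D : set RV) (Q : RV -> \bar R) : set RV :=
  fun Y => exists n x a, @lin_rep D Q n x a Y.

End Defs.

From HB Require Import structures.
From mathcomp Require Import all_boot all_order all_algebra.
From mathcomp Require Import all_classical all_reals ereal.
From mathcomp Require Import lra.

Set Implicit Arguments.
Unset Strict Implicit.
Unset Printing Implicit Defensive.
Import Order.TTheory GRing.Theory Num.Theory.
Local Open Scope classical_set_scope.
Local Open Scope ring_scope.

(* Coherence_1 extends from families of distinct variables to arbitrary finite
   families by merging repeated variables: the merged coefficients keep the
   required signs because all coefficients of a variable with infinite
   prevision have one sign.  Hence, if sum_t al_t x_t <= k pointwise with
   admissible signs, every al_t Q(x_t) is finite (otherwise the freely chosen
   constant c_t could violate coherence) and sum_t al_t Q(x_t) <= k.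
   Applied to x a - y b for two representations of the same Y, this shows that
   p_Y does not depend on the representation; applied to the flattened family
   of the X_ij in sum_i beta_i (sum_j A_ij X_ij - c_i) it gives coherence on L;
   applied to a coherent extension P' and the representations Y = 1 Y and
   Y = sum_j a_j x_j it gives uniqueness. *)

Lemma partition_big_undup (R : Type) (idx : R) (op : Monoid.com_law idx)
    (I J : eqType) (r : seq I) (p : I -> J) (F : I -> R) :
  \big[op/idx]_(i <- r) F i =
  \big[op/idx]_(j <- undup (map p r)) \big[op/idx]_(i <- r | p i == j) F i.
Proof.
rewrite (exchange_big_dep xpredT) //=; apply: eq_big_seq => i ri.
rewrite (eq_bigl (pred1 (p i))) => [|j]; last by rewrite /= eq_sym.
by rewrite -big_filter filter_pred1_uniq ?undup_uniq ?big_seq1 ?mem_undup ?map_f.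
Qed.

Lemma big_sig (R : Type) (idx : R) (op : Monoid.com_law idx) (I : finType)
    (J : I -> finType) (F : forall i, J i -> R) :
  \big[op/idx]_i \big[op/idx]_(j : J i) F i j =
  \big[op/idx]_(p : {i : I & J i}) F (tag p) (tagged p).
Proof. exact: (sig_big_dep xpredT (fun _ _ => true)). Qed.

Section ExtendedRealProducts.
Variable R : realType.
Local Open Scope ereal_scope.

Lemma EFin_mul_fin_num_eq0 (r : R) (e : \bar R) :
  r%:E * e \is a fin_num -> e \isn't a fin_num -> r = 0%R.
Proof.
case: e => [s||] //= + _; apply: contraTeq => r0.
  by rewrite mulry; case: sgrP r0; rewrite ?mul1e ?mulN1e.
by rewrite mulrNy; case: sgrP r0; rewrite ?mul1e ?mulN1e.
Qed.

Lemma EFin_muly_neqNy (r : R) : (r%:E * +oo != -oo) = (0 <= r)%R.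
Proof. by rewrite mulry; case: sgrP => _; rewrite ?mul0e ?mul1e ?mulN1e. Qed.

Lemma EFin_muly_neqy (r : R) : (r%:E * +oo != +oo) = (r <= 0)%R.
Proof. by rewrite mulry; case: sgrP => _; rewrite ?mul0e ?mul1e ?mulN1e. Qed.

Lemma EFin_mulNy_neqNy (r : R) : (r%:E * -oo != -oo) = (r <= 0)%R.
Proof. by rewrite mulrNy; case: sgrP => _; rewrite ?mul0e ?mul1e ?mulN1e. Qed.

Lemma EFin_mulNy_neqy (r : R) : (r%:E * -oo != +oo) = (0 <= r)%R.
Proof. by rewrite mulrNy; case: sgrP => _; rewrite ?mul0e ?mul1e ?mulN1e. Qed.

Lemma ereal_sup_range_lt0 (T : Type) (f : T -> R) :
  ereal_sup (range (fun w => (f w)%:E)) < 0 ->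
  exists2 r : R, (r < 0)%R & forall w, (f w <= r)%R.
Proof.
have fs w : (f w)%:E <= ereal_sup (range (fun w => (f w)%:E)).
  by apply: ereal_sup_ubound; exists w.
case: (ereal_sup _) fs => [r fs | // | fs _]; first by exists r => // w; rewrite -lee_fin.
by exists (-1)%R => [|w]; [rewrite ltrN10 | have := fs w; rewrite leeNy_eq].
Qed.

Lemma sume_neqNy (I : finType) (f : I -> \bar R) :
  \sum_i f i != -oo -> forall i, f i != -oo.
Proof.
move=> sum_neqNy i; apply: contra sum_neqNy => /eqP fi.
by apply/eqP/esum_eqNyP; exists i; rewrite mem_index_enum fi.
Qed.

Lemma sume_neqy (n : nat) (f : 'I_n -> \bar R) :
  wd_sum f -> \sum_i f i != +oo -> forall i, f i != +oo.
Proof.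
move=> wd sum_neqy i; apply: contra sum_neqy => /eqP fi.
have f_neqNy j : true -> f j != -oo.
  by move=> _; apply/eqP => fj; apply: wd; split; [exists i | exists j].
by apply/eqP/(esum_eqyP _ f_neqNy); exists i; rewrite mem_index_enum fi.
Qed.

End ExtendedRealProducts.

Section Coherence.
Variables (R : realType) (Omega : Type).
Notation RV := (Omega -> R).
Variables (S : set RV) (P : RV -> \bar R).
Hypothesis coherentP : coherent1 S P.

Lemma coherent1_uniq (s : seq RV) (a c : RV -> R) :
  uniq s -> {in s, forall v, S v} ->
  {in s, forall v, P v = +oo%E -> 0 <= a v} ->
  {in s, forall v, P v = -oo%E -> a v <= 0} ->
  {in s, forall v, P v \is a fin_num -> P v = (c v)%:E} ->
  (0 <= ereal_sup (range (fun w => (\sum_(v <- s) a v * (v w - c v))%:E)))%E.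
Proof.
move=> s_uniq sS ap an cf; pose x (i : 'I_(size s)) := nth (fun=> 0) s i.
have xs i : x i \in s by rewrite mem_nth.
have x_inj : injective x by move=> i j /eqP; rewrite nth_uniq // => /eqP/val_inj.
have -> : (fun w => (\sum_(v <- s) a v * (v w - c v))%:E) =
    (fun w => (\sum_(i < size s) a (x i) * (x i w - c (x i)))%:E).
  by apply: funext => w; rewrite (big_nth (fun=> 0)) big_mkord.
by apply: coherentP => // i; [apply: sS | apply: ap | apply: an | apply: cf].
Qed.

Section MergeDuplicates.
Variables (T : finType) (x : T -> RV) (a c : T -> R).
Hypotheses (ap : forall t, P (x t) = +oo%E -> 0 <= a t)
           (an : forall t, P (x t) = -oo%E -> a t <= 0)
           (cf : forall t, P (x t) \is a fin_num -> P (x t) = (c t)%:E).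

Definition merged_coef (v : RV) := \sum_(t | x t == v) a t.

Definition merged_const (v : RV) :=
  if P v \is a fin_num then fine (P v)
  else (\sum_(t | x t == v) a t * c t) / merged_coef v.

Lemma merged_coef_ge0 v : P v = +oo%E -> 0 <= merged_coef v.
Proof. by move=> Pv; apply: sumr_ge0 => t /eqP xt; apply: ap; rewrite xt. Qed.

Lemma merged_coef_le0 v : P v = -oo%E -> merged_coef v <= 0.
Proof. by move=> Pv; apply: sumr_le0 => t /eqP xt; apply: an; rewrite xt. Qed.

(* The coefficients merged into an infinite prevision all have the same sign. *)
Lemma merged_coef_eq0 v t : P v \isn't a fin_num -> merged_coef v = 0 ->
  x t = v -> a t = 0.
Proof.
move=> Pv A0 /eqP xt.
have [Py | PNy] : P v = +oo%E \/ P v = -oo%E.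
  by move: Pv; case: (P v) => [r||] // _; [left | right].
- have a_ge0 u : x u == v -> 0 <= a u by move=> /eqP xu; apply: ap; rewrite xu.
  exact: (psumr_eq0P a_ge0 A0).
- have Na_ge0 u : x u == v -> 0 <= - a u.
    by move=> /eqP xu; rewrite oppr_ge0; apply: an; rewrite xu.
  apply/eqP; rewrite -oppr_eq0; apply/eqP; apply: (psumr_eq0P Na_ge0) xt.
  by rewrite sumrN -/(merged_coef v) A0 oppr0.
Qed.

Lemma merged_class_sum v w :
  \sum_(t | x t == v) a t * (x t w - c t) =
  merged_coef v * (v w - merged_const v).
Proof.
rewrite (eq_bigr (fun t => a t * v w - a t * c t)) => [|t /eqP ->]; last first.
  by rewrite mulrBr.
rewrite sumrB -mulr_suml -/(merged_coef v) /merged_const.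
case: ifPn => [Pv | Pv].
  rewrite mulrBr; congr (_ - _); rewrite mulr_suml; apply: eq_bigr => t /eqP xt.
  by rewrite -xt in Pv *; rewrite cf.
have [A0 | A0] := eqVneq (merged_coef v) 0; last first.
  by rewrite mulrBr mulrCA divff // mulr1.
rewrite A0 !mul0r big1 ?subr0 // => t /eqP xt.
by rewrite (merged_coef_eq0 Pv A0 xt) mul0r.
Qed.

Lemma coherent1_family : (forall t, S (x t)) ->
  (0 <= ereal_sup (range (fun w => (\sum_t a t * (x t w - c t))%:E)))%E.
Proof.
move=> xS; set s := undup (map x (index_enum T)).
have sx v : v \in s -> exists t, x t = v.
  by rewrite mem_undup => /mapP[t _ ->]; exists t.
have -> : (fun w => (\sum_t a t * (x t w - c t))%:E) =
    (fun w => (\sum_(v <- s) merged_coef v * (v w - merged_const v))%:E).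
  apply: funext => w; congr EFin; rewrite (partition_big_undup _ _ x).
  by apply: eq_bigr => v _; rewrite merged_class_sum.
apply: coherent1_uniq; first exact: undup_uniq.
- by move=> v /sx[t <-].
- by move=> v _; apply: merged_coef_ge0.
- by move=> v _; apply: merged_coef_le0.
- by move=> v _ Pv; rewrite /merged_const Pv fineK.
Qed.

End MergeDuplicates.

Section BoundedCombination.
Variables (T : finType) (x : T -> RV) (al : T -> R) (k : R).
Hypotheses (xS : forall t, S (x t))
           (alp : forall t, P (x t) = +oo%E -> 0 <= al t)
           (aln : forall t, P (x t) = -oo%E -> al t <= 0)
           (bounded : forall w, \sum_t al t * x t w <= k).

Lemma bounded_combination_const_le (c : T -> R) :
  (forall t, P (x t) \is a fin_num -> P (x t) = (c t)%:E) ->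
  \sum_t al t * c t <= k.
Proof.
move=> cf; rewrite -subr_ge0 -lee_fin.
apply: le_trans (coherent1_family alp aln cf xS) _.
apply: ge_ereal_sup => _ [w _ <-]; rewrite lee_fin.
under eq_bigr do rewrite mulrBr.
by rewrite sumrB lerD2r.
Qed.

Lemma bounded_combination_fin_num t : ((al t)%:E * P (x t))%E \is a fin_num.
Proof.
(* Otherwise P (x t) is infinite and al t != 0, so a suitable choice of
   c t pushes \sum_u al u * c u above k. *)
apply/negPn/negP => nf.
have Pt : P (x t) \isn't a fin_num by apply: contra nf => f; apply: fin_numM.
have al0 : al t != 0 by apply: contra nf => /eqP ->; rewrite mul0e.
pose B := \sum_(u | u != t) al u * fine (P (x u)).
pose c u := if u == t then (k - B + 1) / al t else fine (P (x u)).
have cf u : P (x u) \is a fin_num -> P (x u) = (c u)%:E.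
  by rewrite /c; case: eqP => [-> f | _ f]; [move: Pt; rewrite f | rewrite fineK].
have := bounded_combination_const_le cf.
rewrite (bigD1 t) //= {1}/c eqxx mulrCA divff // mulr1.
rewrite (eq_bigr (fun u => al u * fine (P (x u)))) => [|u /negbTE ut]; last first.
  by rewrite /c ut.
rewrite -/B; lra.
Qed.

Lemma bounded_combination_sum_le : \sum_t fine ((al t)%:E * P (x t)) <= k.
Proof.
rewrite (eq_bigr (fun t => al t * fine (P (x t)))) => [|t _]; last first.
  have [f | nf] := boolP (P (x t) \is a fin_num); first by rewrite fineM.
  by rewrite (EFin_mul_fin_num_eq0 (bounded_combination_fin_num t) nf) mul0e mul0r.
by apply: bounded_combination_const_le => t f; rewrite fineK.
Qed.

End BoundedCombination.

Lemma rep_val_le n m (x : 'I_n -> RV) (a : 'I_n -> R) (y : 'I_m -> RV)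
    (b : 'I_m -> R) (Y : RV) :
  lin_rep S P x a Y -> lin_rep S P y b Y -> (rep_val P x a <= rep_val P y b)%E.
Proof.
move=> [xS Yx _] [yS Yy wdy]; rewrite /rep_val.
have [->|xNy] := eqVneq (\sum_j (a j)%:E * P (x j))%E -oo%E; first exact: leNye.
have [->|yy] := eqVneq (\sum_j (b j)%:E * P (y j))%E +oo%E; first exact: leey.
have xjNy := sume_neqNy xNy; have yjy := sume_neqy wdy yy.
pose z (t : 'I_n + 'I_m) := match t with inl j => x j | inr j => y j end.
pose al (t : 'I_n + 'I_m) := match t with inl j => a j | inr j => - b j end.
have zS t : S (z t) by case: t.
have alp t : P (z t) = +oo%E -> 0 <= al t.
  case: t => [j|j] /= Pz; first by move: (xjNy j); rewrite Pz EFin_muly_neqNy.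
  by move: (yjy j); rewrite Pz EFin_muly_neqy oppr_ge0.
have aln t : P (z t) = -oo%E -> al t <= 0.
  case: t => [j|j] /= Pz; first by move: (xjNy j); rewrite Pz EFin_mulNy_neqNy.
  by move: (yjy j); rewrite Pz EFin_mulNy_neqy oppr_le0.
have bounded w : \sum_t al t * z t w <= 0.
  have /= Yxw := congr1 (fun f => f w) Yx; have /= Yyw := congr1 (fun f => f w) Yy.
  rewrite big_sumType /=; under [X in _ + X]eq_bigr do rewrite mulNr.
  by rewrite sumrN -Yxw -Yyw subrr.
have zfin := bounded_combination_fin_num zS alp aln bounded.
have yfin j : ((b j)%:E * P (y j))%E \is a fin_num.
  by have := zfin (inr j); rewrite /= EFinN mulNe fin_numN.
rewrite -[X in (X <= _)%E]EFin_sum_fine => [|j _]; last exact: (zfin (inl j)).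
rewrite -EFin_sum_fine => [|j _]; last exact: yfin.
rewrite lee_fin -subr_le0 -sumrN.
have := bounded_combination_sum_le zS alp aln bounded; rewrite big_sumType /=.
by under [X in _ + X <= _]eq_bigr do rewrite EFinN mulNe fineN.
Qed.

Lemma rep_val_uniq n m (x : 'I_n -> RV) (a : 'I_n -> R) (y : 'I_m -> RV)
    (b : 'I_m -> R) (Y : RV) :
  lin_rep S P x a Y -> lin_rep S P y b Y -> rep_val P x a = rep_val P y b.
Proof.
by move=> xY yY; apply: le_anti; rewrite (rep_val_le xY yY) (rep_val_le yY xY).
Qed.

End Coherence.

Section SingletonRepresentation.
Variables (R : realType) (Omega : Type).
Notation RV := (Omega -> R).
Variables (S : set RV) (P : RV -> \bar R).

Lemma lin_rep1 (X : RV) : S X -> lin_rep S P (fun _ : 'I_1 => X) (fun _ => 1) X.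
Proof.
move=> SX; split => //; first by apply: funext => w; rewrite big_ord1 mul1r.
by move=> [[j Qj] [k Qk]]; rewrite Qj in Qk.
Qed.

Lemma rep_val1 (X : RV) : rep_val P (fun _ : 'I_1 => X) (fun _ => 1) = P X.
Proof. by rewrite /rep_val big_ord1 mul1e. Qed.

End SingletonRepresentation.

Section LinearExtension.
Variables (R : realType) (Omega : Type).
Notation RV := (Omega -> R).
Variables (D : set RV) (Q : RV -> \bar R).

Lemma linL_sub (X : RV) : D X -> linL D Q X.
Proof. by move=> DX; exists 1%N, (fun _ => X), (fun _ => 1); apply: (lin_rep1 Q). Qed.

Lemma rep_val_scale_sign n (X : 'I_n -> RV) (A : 'I_n -> R) (Y : RV) (b : R) j :
  lin_rep D Q X A Y ->
  (rep_val Q X A = +oo%E -> 0 <= b) -> (rep_val Q X A = -oo%E -> b <= 0) ->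
  (Q (X j) = +oo%E -> 0 <= b * A j) /\ (Q (X j) = -oo%E -> b * A j <= 0).
Proof.
move=> [_ _ wd]; case E: (rep_val Q X A) => [r||] bp bn.
- have /sum_fin_numP Xfin : rep_val Q X A \is a fin_num by rewrite E.
  have /EFin_mul_fin_num_eq0 A0 := Xfin j (mem_index_enum j) isT.
  by split => QX; rewrite A0 ?mulr0 // QX.
- have XjNy : ((A j)%:E * Q (X j) != -oo)%E.
    by move: j; apply: sume_neqNy; rewrite -/(rep_val Q X A) E.
  have b_ge0 := bp erefl.
  split => QX; move: XjNy; rewrite QX ?EFin_muly_neqNy ?EFin_mulNy_neqNy => A_sg.
    exact: mulr_ge0.
  exact: mulr_ge0_le0.
- have Xjy : ((A j)%:E * Q (X j) != +oo)%E.
    by move: j; apply: (sume_neqy wd); rewrite -/(rep_val Q X A) E.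
  have b_le0 := bn erefl.
  split => QX; move: Xjy; rewrite QX ?EFin_muly_neqy ?EFin_mulNy_neqy => A_sg.
    exact: mulr_le0.
  exact: mulr_le0_ge0.
Qed.

Lemma rep_val_scale_fine n (X : 'I_n -> RV) (A : 'I_n -> R) (b c : R) :
  (forall j, ((b * A j)%:E * Q (X j))%E \is a fin_num) ->
  (rep_val Q X A \is a fin_num -> rep_val Q X A = c%:E) ->
  \sum_j fine ((b * A j)%:E * Q (X j)) = b * c.
Proof.
move=> bfin cE; have [-> | b0] := eqVneq b 0.
  by rewrite mul0r big1 // => j _; rewrite mul0r mul0e.
have Afin j : ((A j)%:E * Q (X j))%E \is a fin_num.
  apply/negPn/negP => nf; move: b0; have := bfin j; rewrite EFinM -muleA.
  by move/EFin_mul_fin_num_eq0/(_ nf)->; rewrite eqxx.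
have Xfin : rep_val Q X A \is a fin_num by apply/sum_fin_numP => j _ _.
have -> : c = \sum_j fine ((A j)%:E * Q (X j)).
  by apply: EFin_inj; rewrite -cE // EFin_sum_fine.
by rewrite mulr_sumr; apply: eq_bigr => j _; rewrite EFinM -muleA fineM.
Qed.

Hypothesis coherentQ : coherent1 D Q.

Lemma coherent1_linL (P : RV -> \bar R) :
  (forall Y n (X : 'I_n -> RV) A, lin_rep D Q X A Y -> P Y = rep_val Q X A) ->
  coherent1 (linL D Q) P.
Proof.
move=> PE N Y be c _ YL bp bn cf.
have /choice[r rY] : forall i, exists r : {k : nat & ('I_k -> RV) * ('I_k -> R)}%type,
    lin_rep D Q (tagged r).1 (tagged r).2 (Y i).
  by move=> i; have [k [X [A XY]]] := YL i; exists (existT _ k (X, A)).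
pose X i := (tagged (r i)).1; pose A i := (tagged (r i)).2.
have PY i : P (Y i) = rep_val Q (X i) (A i) := PE _ _ _ _ (rY i).
rewrite leNgt; apply/negP => /ereal_sup_range_lt0[sr sr_lt0 Ysr].
pose T := {i : 'I_N & 'I_(tag (r i))}.
pose z (p : T) := X (tag p) (tagged p).
pose al (p : T) := be (tag p) * A (tag p) (tagged p).
have zD p : D (z p) by case: p => i j; have [XD _ _] := rY i; apply: XD.
have alsg (p : T) := rep_val_scale_sign (tagged p) (rY (tag p))
  (fun h => bp _ (etrans (PY _) h)) (fun h => bn _ (etrans (PY _) h)).
have bounded w : \sum_p al p * z p w <= \sum_i be i * c i + sr.
  have := Ysr w; under eq_bigr do rewrite mulrBr; rewrite sumrB.
  have -> : \sum_i be i * Y i w = \sum_p al p * z p w.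
    rewrite -(big_sig _ (fun i (j : 'I_(tag (r i))) => be i * A i j * X i j w)).
    apply: eq_bigr => i _; have [_ -> _] := rY i.
    by rewrite mulr_sumr; apply: eq_bigr => j _; rewrite mulrA.
  lra.
have alp p : Q (z p) = +oo%E -> 0 <= al p by case: (alsg p).
have aln p : Q (z p) = -oo%E -> al p <= 0 by case: (alsg p).
have zfin := bounded_combination_fin_num coherentQ zD alp aln bounded.
have := bounded_combination_sum_le coherentQ zD alp aln bounded.
rewrite -(big_sig _ (fun i (j : 'I_(tag (r i))) => fine ((be i * A i j)%:E * Q (X i j)))).
have cfX i : rep_val Q (X i) (A i) \is a fin_num ->
    rep_val Q (X i) (A i) = (c i)%:E by rewrite -PY; exact: cf.
have Xfin i (j : 'I_(tag (r i))) : ((be i * A i j)%:E * Q (X i j))%E \is a fin_num.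
  exact: (zfin (Tagged (fun i => 'I_(tag (r i))) j)).
under eq_bigr => i _ do rewrite (rep_val_scale_fine (Xfin i) (cfX i)).
lra.
Qed.

Lemma coherent1_ext_rep_val (P' : RV -> \bar R) :
  coherent1 (linL D Q) P' -> (forall X, D X -> P' X = Q X) ->
  forall Y n (X : 'I_n -> RV) A, lin_rep D Q X A Y -> P' Y = rep_val Q X A.
Proof.
move=> coherentP' P'Q Y n X A XY; have [XD YX wd] := XY.
have P'XQ : (fun j => ((A j)%:E * P' (X j))%E) = (fun j => ((A j)%:E * Q (X j))%E).
  by apply: funext => j; rewrite P'Q.
have XY' : lin_rep (linL D Q) P' X A Y.
  by split => // [j|]; [apply/linL_sub/XD | rewrite P'XQ].
have -> : rep_val Q X A = rep_val P' X A by apply: eq_bigr => j _; rewrite P'Q.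
have YL : linL D Q Y by exists n, X, A.
rewrite -[P' Y](rep_val1 P' Y).
exact: (rep_val_uniq coherentP' (lin_rep1 P' YL) XY').
Qed.

End LinearExtension.

Theorem lemma5p3 (R : realType) (Omega : Type) (HOmega : inhabited Omega)
    (D : set (Omega -> R)) (Q : (Omega -> R) -> \bar R)
    (Hconst : forall c : R, D (fun _ => c))
    (HQ : coherent1 D Q) :
  (* P(Y) = p_Y does not depend on the representation of Y *)
  (forall (Y : Omega -> R) (n m : nat) (x : 'I_n -> Omega -> R) (a : 'I_n -> R)
          (y : 'I_m -> Omega -> R) (b : 'I_m -> R),
      lin_rep D Q x a Y -> lin_rep D Q y b Y -> rep_val Q x a = rep_val Q y b) /\
  (* the prevision so defined is a coherent_1 extension of Q to L *)
  (forall P : (Omega -> R) -> \bar R,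
      (forall (Y : Omega -> R) (n : nat) (x : 'I_n -> Omega -> R) (a : 'I_n -> R),
          lin_rep D Q x a Y -> P Y = rep_val Q x a) ->
      coherent1 (linL D Q) P /\ (forall X, D X -> P X = Q X)) /\
  (* and it is the unique coherent_1 extension of Q to L *)
  (forall P' : (Omega -> R) -> \bar R,
      coherent1 (linL D Q) P' -> (forall X, D X -> P' X = Q X) ->
      forall (Y : Omega -> R) (n : nat) (x : 'I_n -> Omega -> R) (a : 'I_n -> R),
        lin_rep D Q x a Y -> P' Y = rep_val Q x a).
Proof.
split; first by move=> Y n m x a y b; apply: rep_val_uniq.
split; last exact: coherent1_ext_rep_val.
move=> P PE; split; first exact: coherent1_linL.
by move=> X DX; rewrite (PE _ _ _ _ (lin_rep1 Q DX)) rep_val1.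
Qed.
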